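(* Let $(G,\preceq)$ be a cc sponge group. Let $C\subseteq G$ be invariant under conjugation, with $\mathbf{1}\in C$ and $\mathbf{1}\preceq c$ for all $c\in C$, and assume that for all $x,y\in G$: if $y\in C$, $\mathbf{1}\preceq x$ and $x\preceq y$, then $x\in C$ and $x^{-1}\cdot y\in C$. Define the relation $\sqsubseteq$ on $G$ by $x\sqsubseteq y\iff x^{-1}\cdot y\in C$. Then $(G,\sqsubseteq)$ is a cc sponge group.
   Context: An orientation is a reflexive, antisymmetric binary relation. An oriented group is a group $G$ (operation $\cdot$, neutral element $\mathbf{1}$) with an orientation $\preceq$ such that $x\preceq y$ implies $x\cdot z\preceq y\cdot z$ and $z\cdot x\preceq z\cdot y$ for all $x,y,z$. A subset $P$ is right-bounded if some $s$ has $p\preceq s$ for all $p\in P$; the join of $P$ is an $x$ with $p\preceq x$ for all $p\in P$ and $x\preceq y$ whenever $p\preceq y$ for all $p\in P$. An oriented set is a cc sponge if every nonempty right-bounded subset has a join. A cc sponge group is an oriented group that is a cc sponge. *)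

Set Implicit Arguments.

Definition is_group (T : Type) (mul : T -> T -> T) (one : T) (inv : T -> T) : Prop :=
  (forall x y z, mul x (mul y z) = mul (mul x y) z) /\
  (forall x, mul one x = x) /\ (forall x, mul x one = x) /\
  (forall x, mul (inv x) x = one) /\ (forall x, mul x (inv x) = one).

Definition orientation (T : Type) (le : T -> T -> Prop) : Prop :=
  (forall x, le x x) /\ (forall x y, le x y -> le y x -> x = y).

Definition oriented_group (T : Type) (mul : T -> T -> T) (one : T) (inv : T -> T)
  (le : T -> T -> Prop) : Prop :=
  is_group mul one inv /\ orientation le /\
  (forall x y z, le x y -> le (mul x z) (mul y z) /\ le (mul z x) (mul z y)).

Definition right_bounded (T : Type) (le : T -> T -> Prop) (P : T -> Prop) : Prop :=
  exists s, forall p, P p -> le p s.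

Definition is_join (T : Type) (le : T -> T -> Prop) (P : T -> Prop) (x : T) : Prop :=
  (forall p, P p -> le p x) /\
  (forall y, (forall p, P p -> le p y) -> le x y).

Definition cc_sponge (T : Type) (le : T -> T -> Prop) : Prop :=
  orientation le /\
  forall P : T -> Prop, (exists p, P p) -> right_bounded le P -> exists x, is_join le P x.

Definition cc_sponge_group (T : Type) (mul : T -> T -> T) (one : T) (inv : T -> T)
  (le : T -> T -> Prop) : Prop :=
  oriented_group mul one inv le /\ cc_sponge le.


(* The relation [x ⊑ y] is the left-invariant order with positive cone [C].
   It is right-invariant because [C] is closed under conjugation, and it
   refines [⪯] since [C] is [⪯]-positive.  The convexity hypothesis on [C]
   says that whenever [x ⊑ z] and [x ⪯ y ⪯ z] we also have [x ⊑ y ⊑ z]; so the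
   [⪯]-join of a nonempty [⊑]-bounded set, which lies [⪯]-between the set and
   any of its [⊑]-bounds, is also its [⊑]-join. *)

Set Implicit Arguments.
Unset Strict Implicit.

Section Group.

Variables (T : Type) (mul : T -> T -> T) (one : T) (inv : T -> T).
Hypothesis group_mul : is_group mul one inv.

Let mul_assoc : forall x y z, mul x (mul y z) = mul (mul x y) z.
Proof. apply group_mul. Qed.
Let mul_1_l : forall x, mul one x = x.
Proof. apply group_mul. Qed.
Let mul_1_r : forall x, mul x one = x.
Proof. apply group_mul. Qed.
Let mul_inv_l : forall x, mul (inv x) x = one.
Proof. apply group_mul. Qed.
Let mul_inv_r : forall x, mul x (inv x) = one.
Proof. apply group_mul. Qed.

Lemma inv_unique a b : mul a b = one -> b = inv a.
Proof.
  intros E. rewrite <- (mul_1_l b), <- (mul_inv_l a), <- mul_assoc, E, mul_1_r.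
  reflexivity.
Qed.

Lemma inv_inv a : inv (inv a) = a.
Proof. symmetry. apply inv_unique, mul_inv_l. Qed.

Lemma inv_mul a b : inv (mul a b) = mul (inv b) (inv a).
Proof.
  symmetry. apply inv_unique.
  rewrite mul_assoc, <- (mul_assoc a b), mul_inv_r, mul_1_r, mul_inv_r.
  reflexivity.
Qed.

Lemma inv_mul_cancel_l a b : mul (inv a) (mul a b) = b.
Proof. rewrite mul_assoc, mul_inv_l, mul_1_l. reflexivity. Qed.

Lemma mul_inv_cancel_l a b : mul a (mul (inv a) b) = b.
Proof. rewrite mul_assoc, mul_inv_r, mul_1_l. reflexivity. Qed.

End Group.

Section PositiveCone.

Variables (T : Type) (mul : T -> T -> T) (one : T) (inv : T -> T).
Variables (le : T -> T -> Prop) (C : T -> Prop).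

Hypothesis oriented_le : oriented_group mul one inv le.
Hypothesis C_conj : forall g c, C c -> C (mul (mul g c) (inv g)).
Hypothesis C_one : C one.
Hypothesis C_ge1 : forall c, C c -> le one c.
Hypothesis C_convex :
  forall x y, C y -> le one x -> le x y -> C x /\ C (mul (inv x) y).

Let group_mul : is_group mul one inv.
Proof. apply oriented_le. Qed.
Let mul_assoc : forall x y z, mul x (mul y z) = mul (mul x y) z.
Proof. apply group_mul. Qed.
Let mul_1_r : forall x, mul x one = x.
Proof. apply group_mul. Qed.
Let mul_inv_l : forall x, mul (inv x) x = one.
Proof. apply group_mul. Qed.
Let mul_inv_r : forall x, mul x (inv x) = one.
Proof. apply group_mul. Qed.
Let le_antisym : forall x y, le x y -> le y x -> x = y.
Proof. apply oriented_le. Qed.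
Let le_mul_l : forall z x y, le x y -> le (mul z x) (mul z y).
Proof. intros z x y; apply oriented_le. Qed.

Definition cone_le (x y : T) : Prop := C (mul (inv x) y).

Lemma cone_le_le x y : cone_le x y -> le x y.
Proof.
  intros Hxy. pose proof (le_mul_l x (C_ge1 Hxy)) as Hle.
  rewrite mul_1_r, (mul_inv_cancel_l group_mul) in Hle. exact Hle.
Qed.

Lemma le_one_div x y : le x y -> le one (mul (inv x) y).
Proof. intros Hxy. rewrite <- (mul_inv_l x). apply le_mul_l, Hxy. Qed.

Lemma cone_le_interval x y z :
  cone_le x z -> le x y -> le y z -> cone_le x y /\ cone_le y z.
Proof.
  intros Hxz Hxy Hyz.
  destruct (C_convex Hxz (le_one_div Hxy) (le_mul_l (inv x) Hyz)) as [Hxy' Hyz'].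
  split; [exact Hxy' |].
  unfold cone_le.
  rewrite (inv_mul group_mul), (inv_inv group_mul), <- mul_assoc,
    (mul_inv_cancel_l group_mul) in Hyz'.
  exact Hyz'.
Qed.

Lemma cone_orientation : orientation cone_le.
Proof.
  split.
  - intros x. unfold cone_le. rewrite mul_inv_l. exact C_one.
  - intros x y Hxy Hyx. unfold cone_le in *.
    set (a := mul (inv x) y) in *.
    assert (Hyx_inv : mul (inv y) x = inv a).
    { unfold a. rewrite (inv_mul group_mul), (inv_inv group_mul). reflexivity. }
    rewrite Hyx_inv in Hyx.
    assert (Ha_le1 : le a one).
    { pose proof (le_mul_l a (C_ge1 Hyx)) as Hle.
      rewrite mul_1_r, mul_inv_r in Hle. exact Hle. }
    assert (Ha : a = one) by (apply le_antisym; auto).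
    unfold a in Ha.
    rewrite <- (mul_inv_cancel_l group_mul x y), Ha, mul_1_r. reflexivity.
Qed.

Lemma cone_le_mul_r x y z : cone_le x y -> cone_le (mul x z) (mul y z).
Proof.
  intros Hxy. pose proof (C_conj (inv z) Hxy) as Hconj.
  rewrite (inv_inv group_mul), mul_assoc in Hconj.
  unfold cone_le. rewrite (inv_mul group_mul), !mul_assoc. exact Hconj.
Qed.

Lemma cone_le_mul_l x y z : cone_le x y -> cone_le (mul z x) (mul z y).
Proof.
  unfold cone_le.
  rewrite (inv_mul group_mul), <- mul_assoc, (inv_mul_cancel_l group_mul).
  trivial.
Qed.

Lemma cone_oriented_group : oriented_group mul one inv cone_le.
Proof.
  split; [exact group_mul | split; [exact cone_orientation |]].
  intros x y z Hxy. split; [apply cone_le_mul_r | apply cone_le_mul_l]; exact Hxy.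
Qed.

Lemma cone_is_join (P : T -> Prop) p0 s j :
  P p0 -> (forall p, P p -> cone_le p s) -> is_join le P j -> is_join cone_le P j.
Proof.
  intros Hp0 Hs [Hj_ub Hj_least].
  assert (Hj_le : forall y, (forall p, P p -> cone_le p y) -> le j y).
  { intros y Hy. apply Hj_least. intros p Hp. apply cone_le_le, Hy, Hp. }
  split.
  - intros p Hp. apply (cone_le_interval (Hs p Hp) (Hj_ub p Hp)), Hj_le, Hs.
  - intros y Hy. apply (cone_le_interval (Hy p0 Hp0) (Hj_ub p0 Hp0)), Hj_le, Hy.
Qed.

Lemma cone_cc_sponge : cc_sponge le -> cc_sponge cone_le.
Proof.
  intros [_ le_joins]. split; [exact cone_orientation |].
  intros P [p0 Hp0] [s Hs].
  destruct (le_joins P (ex_intro _ p0 Hp0)) as [j Hj].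
  { exists s. intros p Hp. apply cone_le_le, Hs, Hp. }
  exists j. exact (cone_is_join Hp0 Hs Hj).
Qed.

End PositiveCone.

Theorem mainTheorem10 (T : Type) (mul : T -> T -> T) (one : T) (inv : T -> T)
  (le : T -> T -> Prop) (C : T -> Prop) :
  cc_sponge_group mul one inv le ->
  (forall g c, C c -> C (mul (mul g c) (inv g))) ->
  C one ->
  (forall c, C c -> le one c) ->
  (forall x y, C y -> le one x -> le x y -> C x /\ C (mul (inv x) y)) ->
  cc_sponge_group mul one inv (fun x y => C (mul (inv x) y)).
Proof.
  intros [oriented_le sponge_le] C_conj C_one C_ge1 C_convex.
  split.
  - exact (cone_oriented_group oriented_le C_conj C_one C_ge1).
  - exact (cone_cc_sponge oriented_le C_one C_ge1 C_convex sponge_le).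
Qed.
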